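(* Let $a \in \mathbb{R}$ and $w \in \mathbb{C}\setminus\{0\}$ with $(a,w) \in D_c$. Then the equation $z + a - w e^{-\tau z} = 0$ with $\tau = \tau_c(a,w)$ has no roots with positive real part and has at least one root on the imaginary axis.
   Context: $D_c := \{(a,w) \in \mathbb{R}\times(\mathbb{C}\setminus\{0\}) : \operatorname{Re}(w) < a < |w|\}$. For $(a,w) \in D_c$, $\tau_c(a,w) := \frac{1}{\sqrt{|w|^2-a^2}}\left[|\operatorname{Arg}(w)| - \arccos(a/|w|)\right] > 0$, where $\operatorname{Arg}(w)\in(-\pi,\pi]$ is the principal argument and $\arccos:[-1,1]\to[0,\pi]$. *)

From Stdlib Require Import Reals.
From Coquelicot Require Import Complex.
Open Scope R_scope.

Definition Cexp (z : C) : C :=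
  (exp (Re z) * cos (Im z), exp (Re z) * sin (Im z)).

(* Principal argument Arg(w) in (-pi, pi] for w <> 0 (standard formula via
   arccos : [-1,1] -> [0,pi]); the value at w = 0 is irrelevant. *)
Definition Arg (w : C) : R :=
  if Rle_dec 0 (Im w) then acos (Re w / Cmod w) else - acos (Re w / Cmod w).

Definition D_c (a : R) (w : C) : Prop :=
  w <> 0%C /\ Re w < a /\ a < Cmod w.

Definition tau_c (a : R) (w : C) : R :=
  / sqrt (Cmod w ^ 2 - a ^ 2) * (Rabs (Arg w) - acos (a / Cmod w)).

Definition charf (a : R) (w : C) (tau : R) (z : C) : C :=
  (z + RtoC a - w * Cexp (- (RtoC tau * z)))%C.

(* Write r = |w|, Phi = |Arg w|, th = arccos (a / r), so that a = r cos th,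
   0 < th < Phi <= pi and tau_c (r sin th) = Phi - th.

   Imaginary root: for z = i s r sin th (s the sign of Im w) one has
   w e^{-tau z} = r e^{i s th} = a + z.

   No root with Re z > 0: at a root z = x + i y put u = x + a.  Taking moduli,
   (u, y) lies on the curve |u + i y| = rho u := r e^{tau (a - u)}; taking
   arguments, the "phase" |arg (u + i y)| + tau |y|, i.e.
   phase u = arccos (u / rho u) + tau sqrt (rho u^2 - u^2), has cosine
   cos Phi.  But phase a = th + tau r sin th = Phi, and the phase is strictly
   decreasing on [a, u] (its derivative is negative as long as |t| < rho t,
   which holds on [a, 0] because tau (-a) < 1, a consequence of
   t cos t < sin t), so 0 <= phase u < Phi <= pi: a contradiction. *)

From Stdlib Require Import Reals Lra Psatz.
From Coquelicot Require Import Coquelicot.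
Open Scope R_scope.

Lemma ratio_bound b c : 0 < c -> b ^ 2 <= c ^ 2 -> -1 <= b / c <= 1.
Proof. intros Hc Hbc. split; [apply Rle_div_r | apply Rle_div_l]; nra. Qed.

Lemma ratio_bound_lt b c : 0 < c -> b ^ 2 < c ^ 2 -> -1 < b / c < 1.
Proof. intros Hc Hbc. split; [apply Rlt_div_r | apply Rlt_div_l]; nra. Qed.

Lemma sqrt_1_minus_ratio b c : 0 < c -> b ^ 2 <= c ^ 2 ->
  sqrt (1 - (b / c)²) = sqrt (c ^ 2 - b ^ 2) / c.
Proof.
  intros Hc Hbc.
  replace (1 - (b / c)²) with ((c ^ 2 - b ^ 2) / c ^ 2) by (unfold Rsqr; field; lra).
  rewrite sqrt_div_alt, sqrt_pow2 by nra. reflexivity.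
Qed.

Lemma sin_acos_ratio b c : 0 < c -> b ^ 2 <= c ^ 2 ->
  sin (acos (b / c)) = sqrt (c ^ 2 - b ^ 2) / c.
Proof.
  intros Hc Hbc. rewrite sin_acos by (apply ratio_bound; auto).
  apply sqrt_1_minus_ratio; auto.
Qed.

Lemma is_derive_acos x : -1 < x < 1 -> is_derive acos x (-1 / sqrt (1 - x²)).
Proof.
  intros Hx. apply is_derive_Reals.
  apply derive_pt_eq_1 with (derivable_pt_acos x Hx). apply derive_pt_acos.
Qed.

Lemma is_derive_val (f : R -> R) (x d d' : R) : is_derive f x d -> d = d' -> is_derive f x d'.
Proof. now intros H <-. Qed.

Lemma acos_lt x y : -1 <= x <= 1 -> -1 <= y <= 1 -> x < y -> acos y < acos x.
Proof.
  intros Hx Hy Hxy.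
  destruct (Rlt_or_le (acos y) (acos x)) as [H | H]; [exact H | exfalso].
  pose proof (acos_bound x); pose proof (acos_bound y).
  destruct (Rle_lt_or_eq_dec _ _ H) as [Hlt | Heq].
  - pose proof (cos_decreasing_1 (acos x) (acos y) ltac:(lra) ltac:(lra) ltac:(lra) ltac:(lra) Hlt).
    rewrite !cos_acos in *; lra.
  - apply (f_equal cos) in Heq. rewrite !cos_acos in Heq; lra.
Qed.

(* t cos t < sin t on (0, pi): the difference vanishes at 0 and has derivative
   t sin t > 0. *)
Lemma tcos_lt_sin t : 0 < t < PI -> t * cos t < sin t.
Proof.
  intros Ht.
  destruct (MVT_cor2 (fun s => sin s - s * cos s) (fun s => s * sin s) 0 t) as [c [Hmvt Hc]].
  - lra.
  - intros c _. apply is_derive_Reals. auto_derive; [exact I | ring].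
  - rewrite sin_0, cos_0 in Hmvt.
    assert (0 < sin c) by (apply sin_gt_0; lra).
    assert (0 < c * sin c * (t - 0)) by (apply Rmult_lt_0_compat; [apply Rmult_lt_0_compat |]; lra).
    lra.
Qed.

(* For the root picture: rho t = r e^{tau (a - t)} is the modulus of
   w e^{-tau z} when Re z = t - a, and phase t is |arg (t + i y)| + tau |y|
   for the point t + i y of modulus rho t. *)
Section Phase.
Variables r tau a : R.
Hypothesis Hr : 0 < r.

Definition rho (t : R) : R := r * exp (tau * (a - t)).
Definition phase (t : R) : R :=
  acos (t / rho t) + tau * sqrt (rho t ^ 2 - t ^ 2).

Lemma rho_pos t : 0 < rho t.
Proof. unfold rho. apply Rmult_lt_0_compat; [lra | apply exp_pos]. Qed.

Lemma is_derive_rho t : is_derive rho t (- tau * rho t).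
Proof. unfold rho, Rminus. auto_derive; [exact I | ring]. Qed.

Lemma is_derive_phase t : t ^ 2 < rho t ^ 2 ->
  is_derive phase t
    (- (1 + 2 * tau * t + tau ^ 2 * rho t ^ 2) / sqrt (rho t ^ 2 - t ^ 2)).
Proof.
  intros Ht.
  pose proof (rho_pos t) as Hrho.
  assert (Hs : 0 < sqrt (rho t ^ 2 - t ^ 2)) by (apply sqrt_lt_R0; lra).
  assert (Hq : is_derive (fun s => s / rho s) t ((1 + tau * t) / rho t)).
  { eapply is_derive_val.
    - apply (is_derive_div (fun s => s) rho); [apply is_derive_id | apply is_derive_rho | lra].
    - simpl. change (one : R) with 1. field. lra. }
  assert (Hg : is_derive (fun s => rho s ^ 2 - s ^ 2) t (- 2 * (tau * rho t ^ 2 + t))).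
  { unfold rho, Rminus. auto_derive; [exact I | ring]. }
  pose proof (is_derive_comp acos _ t _ _ (is_derive_acos _ (ratio_bound_lt _ _ Hrho Ht)) Hq) as Hacos.
  pose proof (is_derive_scal _ t tau _ (is_derive_sqrt _ t _ Hg ltac:(lra))) as Hsqrt.
  eapply is_derive_val; [apply (is_derive_plus _ _ t _ _ Hacos Hsqrt) |].
  change (plus ?x ?y) with (x + y); change (scal ?x ?y) with (x * y).
  rewrite sqrt_1_minus_ratio by lra.
  field. lra.
Qed.

Lemma phase_start : phase a = acos (a / r) + tau * sqrt (r ^ 2 - a ^ 2).
Proof. unfold phase, rho. now rewrite Rminus_diag, Rmult_0_r, exp_0, Rmult_1_r. Qed.

Lemma cos_phase u y : u ^ 2 + y ^ 2 = rho u ^ 2 ->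
  cos (phase u) = (u * cos (tau * y) - y * sin (tau * y)) / rho u.
Proof.
  intros Huy. pose proof (rho_pos u) as Hrho.
  assert (Hsq : sqrt (rho u ^ 2 - u ^ 2) = Rabs y).
  { rewrite <- sqrt_Rsqr_abs. f_equal. unfold Rsqr. lra. }
  assert (Hcos_even : cos (tau * Rabs y) = cos (tau * y)).
  { unfold Rabs; destruct Rcase_abs; [rewrite <- cos_neg; f_equal|]; ring. }
  assert (Hsin_odd : Rabs y * sin (tau * Rabs y) = y * sin (tau * y)).
  { unfold Rabs; destruct Rcase_abs; [replace (tau * - y) with (- (tau * y)) by ring;
      rewrite sin_neg|]; ring. }
  unfold phase. rewrite Hsq, cos_plus, cos_acos, sin_acos_ratio by (try apply ratio_bound; nra).
  rewrite Hsq, Hcos_even. field_simplify_eq; [| lra]. rewrite Hsin_odd. ring.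
Qed.

Hypothesis Htau : 0 < tau.

Lemma phase_nonneg t : 0 <= phase t.
Proof.
  unfold phase.
  pose proof (acos_bound (t / rho t)). pose proof (sqrt_pos (rho t ^ 2 - t ^ 2)). nra.
Qed.

Lemma rho_le t1 t2 : t1 <= t2 -> rho t2 <= rho t1.
Proof.
  intros Ht. unfold rho. apply Rmult_le_compat_l; [lra |].
  destruct (Req_dec t1 t2) as [-> | Hne]; [lra |].
  apply Rlt_le, exp_increasing. nra.
Qed.

(* On [a, 0], rho t exceeds -t: by e^x >= 1 + x it suffices that the affine
   function r (1 + tau (a - t)) + t is positive at both ends t = a and t = 0. *)
Lemma rho_gt_opp t : - r < a -> (a < 0 -> tau * - a < 1) -> a <= t <= 0 -> - t < rho t.
Proof.
  intros Hra Hsmall Ht.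
  assert (Hlin : r * (1 + tau * (a - t)) <= rho t)
    by (unfold rho; apply Rmult_le_compat_l; [lra | apply exp_ineq1_le]).
  destruct (Rle_or_lt 0 a) as [Ha | Ha].
  - assert (t = 0) by lra. subst t. pose proof (rho_pos 0). lra.
  - specialize (Hsmall Ha).
    assert (Hconv : - a * (r * (1 + tau * (a - t)) + t)
                    = - t * (r + a) + (t - a) * (r * (1 + tau * a))) by ring.
    assert (0 < r * (1 + tau * a)) by nra.
    assert (0 < - t * (r + a) + (t - a) * (r * (1 + tau * a))).
    { destruct (Req_dec t 0) as [-> | Ht0]; nra. }
    nra.
Qed.

(* Where t^2 < rho t ^2 on [a, u], the derivative of the phase is negative
   (its numerator is (1 + tau t)^2 + tau^2 (rho t^2 - t^2) > 0), so by the
   mean value theorem the phase strictly decreases from a to u. *)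
Lemma phase_decreasing u : a < u -> (forall t, a <= t <= u -> t ^ 2 < rho t ^ 2) ->
  phase u < phase a.
Proof.
  intros Hau Hdom.
  destruct (MVT_cor2 phase
    (fun t => - (1 + 2 * tau * t + tau ^ 2 * rho t ^ 2) / sqrt (rho t ^ 2 - t ^ 2)) a u)
    as [c [Hmvt Hc]]; [exact Hau | intros t Ht; apply is_derive_Reals, is_derive_phase, Hdom; lra |].
  pose proof (Hdom c ltac:(lra)) as Hcdom.
  assert (Hs : 0 < sqrt (rho c ^ 2 - c ^ 2)) by (apply sqrt_lt_R0; lra).
  assert (Hnum : 0 < 1 + 2 * tau * c + tau ^ 2 * rho c ^ 2).
  { assert (0 < tau ^ 2 * (rho c ^ 2 - c ^ 2)) by (apply Rmult_lt_0_compat; nra).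
    pose proof (pow2_ge_0 (1 + tau * c)). nra. }
  assert (0 < (1 + 2 * tau * c + tau ^ 2 * rho c ^ 2) / sqrt (rho c ^ 2 - c ^ 2) * (u - a))
    by (apply Rmult_lt_0_compat; [apply Rdiv_lt_0_compat |]; lra).
  enough (phase u - phase a = - ((1 + 2 * tau * c + tau ^ 2 * rho c ^ 2)
                                 / sqrt (rho c ^ 2 - c ^ 2) * (u - a))) by lra.
  rewrite Hmvt. field. lra.
Qed.

Lemma phase_lt_start u y : - r < a -> (a < 0 -> tau * - a < 1) -> a < u ->
  u ^ 2 + y ^ 2 = rho u ^ 2 -> phase u < phase a.
Proof.
  intros Hra Hsmall Hau Huy.
  pose proof (rho_pos u) as Hrho_u.
  destruct (Req_dec y 0) as [-> | Hy].
  - (* u = rho u > 0, where the phase vanishes, while phase a > 0 *)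
    destruct (Rle_or_lt 0 u) as [Hu | Hu].
    2: { pose proof (rho_gt_opp u Hra Hsmall ltac:(lra)). nra. }
    assert (Hu_rho : u = rho u) by nra.
    assert (Hphase_u : phase u = 0).
    { unfold phase. rewrite <- Hu_rho, Rminus_diag, sqrt_0, Rdiv_diag, acos_1 by lra. ring. }
    assert (Har : a < r) by (pose proof (rho_le a u ltac:(lra)) as Hle; unfold rho in Hle at 2;
      rewrite Rminus_diag, Rmult_0_r, exp_0, Rmult_1_r in Hle; lra).
    assert (0 < acos (a / r)).
    { rewrite <- acos_1. apply acos_lt; try split; try apply ratio_bound; try nra.
      apply Rlt_div_l; lra. }
    rewrite Hphase_u, phase_start.
    pose proof (sqrt_pos (r ^ 2 - a ^ 2)). nra.
  - apply phase_decreasing; [exact Hau |]. intros t Ht.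
    pose proof (rho_pos t) as Hrho_t.
    destruct (Rle_or_lt t 0) as [Ht0 | Ht0].
    + pose proof (rho_gt_opp t Hra Hsmall ltac:(lra)). nra.
    + pose proof (rho_le t u ltac:(lra)). assert (0 < y ^ 2) by (apply pow2_gt_0; exact Hy). nra.
Qed.

End Phase.

Lemma root_equations a p q tau x y : charf a (p, q) tau (x, y) = 0%C ->
  x + a = exp (- tau * x) * (p * cos (tau * y) + q * sin (tau * y)) /\
  y = exp (- tau * x) * (q * cos (tau * y) - p * sin (tau * y)).
Proof.
  intros Hz. pose proof (f_equal fst Hz) as Hre. pose proof (f_equal snd Hz) as Him.
  unfold charf, Cexp in Hre, Him; simpl in Hre, Him.
  replace (- (tau * x - 0 * y)) with (- tau * x) in Hre, Him by ring.
  replace (- (tau * y + 0 * x)) with (- (tau * y)) in Hre, Him by ring.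
  rewrite cos_neg, sin_neg in Hre, Him. split; lra.
Qed.

Lemma root_on_phase_curve r a p q tau x y : p ^ 2 + q ^ 2 = r ^ 2 ->
  charf a (p, q) tau (x, y) = 0%C ->
  (x + a) ^ 2 + y ^ 2 = rho r tau a (x + a) ^ 2 /\
  r * ((x + a) * cos (tau * y) - y * sin (tau * y)) = rho r tau a (x + a) * p.
Proof.
  intros Hw Hz. destruct (root_equations _ _ _ _ _ _ Hz) as [Hre Him].
  replace (rho r tau a (x + a)) with (r * exp (- tau * x))
    by (unfold rho; replace (tau * (a - (x + a))) with (- tau * x) by ring; reflexivity).
  pose proof (sin2_cos2 (tau * y)) as Hpyth. unfold Rsqr in Hpyth.
  set (C := cos (tau * y)) in *. set (S := sin (tau * y)) in *.
  set (E := exp (- tau * x)) in *.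
  rewrite Hre, Him. split.
  - transitivity (E ^ 2 * (p ^ 2 + q ^ 2) * (S * S + C * C)); [ring |].
    rewrite Hpyth, Hw. ring.
  - transitivity (r * E * p * (S * S + C * C)); [ring |].
    rewrite Hpyth. ring.
Qed.

Section PolarForm.
Variables (r th Phi tau s : R) (w : C).
Hypotheses (Hr : 0 < r) (Hth : 0 < th) (Hth_Phi : th < Phi) (HPhi : Phi <= PI).
Hypotheses (Hs : s * s = 1) (Hw : w = (r * cos Phi, s * (r * sin Phi))).
Hypothesis Htau : tau * (r * sin th) = Phi - th.

Lemma sin_th_pos : 0 < sin th.
Proof. apply sin_gt_0; lra. Qed.

Lemma polar_tau_pos : 0 < tau.
Proof.
  assert (0 < r * sin th) by (apply Rmult_lt_0_compat; [lra | apply sin_th_pos]).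
  destruct (Rle_or_lt tau 0); [nra | assumption].
Qed.

Lemma polar_a_gt : - r < r * cos th.
Proof.
  pose proof (cos_decreasing_1 th PI ltac:(lra) ltac:(lra) ltac:(lra) ltac:(lra) ltac:(lra)).
  rewrite cos_PI in *. nra.
Qed.

(* For a < 0 the delay satisfies tau (-a) < 1, a consequence of
   (pi - th) cos (pi - th) < sin (pi - th). *)
Lemma polar_delay_small : r * cos th < 0 -> tau * - (r * cos th) < 1.
Proof.
  intros Ha. pose proof sin_th_pos.
  assert (Hcos : cos th < 0) by nra.
  pose proof (tcos_lt_sin (PI - th) ltac:(lra)) as Hsmall.
  rewrite sin_PI_x, cos_minus, cos_PI, sin_PI in Hsmall.
  assert (Hphase : (Phi - th) * - cos th < sin th) by nra.
  nra.
Qed.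

Lemma polar_phase_start : phase r tau (r * cos th) (r * cos th) = Phi.
Proof.
  pose proof sin_th_pos.
  rewrite phase_start.
  replace (r * cos th / r) with (cos th) by (field; lra).
  replace (r ^ 2 - (r * cos th) ^ 2) with ((r * sin th) ^ 2)
    by (pose proof (sin2_cos2 th); unfold Rsqr in *; nra).
  rewrite acos_cos, sqrt_pow2 by nra. lra.
Qed.

(* No root in the open right half-plane: at such a root the phase would lie
   in [0, Phi) and yet have cosine cos Phi. *)
Lemma polar_no_right_root z : charf (r * cos th) w tau z = 0%C -> Re z <= 0.
Proof.
  destruct z as [x y]. intros Hz. unfold Re; simpl.
  destruct (Rle_or_lt x 0) as [Hx | Hx]; [exact Hx | exfalso].
  rewrite Hw in Hz.
  assert (Hmod : (r * cos Phi) ^ 2 + (s * (r * sin Phi)) ^ 2 = r ^ 2).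
  { transitivity (r ^ 2 * (s * s) * (sin Phi)² + r ^ 2 * (cos Phi)²); [unfold Rsqr; ring |].
    rewrite Hs, Rmult_1_r, <- Rmult_plus_distr_l, sin2_cos2. ring. }
  set (a := r * cos th) in *.
  destruct (root_on_phase_curve _ _ _ _ _ _ _ Hmod Hz) as [Hcurve Hphase].
  pose proof polar_tau_pos as Htau_pos.
  assert (Hlt : phase r tau a (x + a) < Phi).
  { rewrite <- polar_phase_start. apply (phase_lt_start _ _ _ Hr Htau_pos _ y);
      [apply polar_a_gt | apply polar_delay_small | lra | exact Hcurve]. }
  assert (Hge := phase_nonneg r tau a Htau_pos (x + a)).
  assert (Hcos : cos (phase r tau a (x + a)) = cos Phi).
  { rewrite (cos_phase _ _ _ Hr _ _ Hcurve). pose proof (rho_pos r tau a Hr (x + a)).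
    apply (Rmult_eq_reg_l r); [| lra]. unfold Rdiv. rewrite <- Rmult_assoc, Hphase. field; lra. }
  pose proof (cos_decreasing_1 (phase r tau a (x + a)) Phi Hge ltac:(lra) ltac:(lra) HPhi Hlt). lra.
Qed.

(* The root on the imaginary axis: z = i s r sin th, since then
   w e^{-tau z} = r e^{i s Phi} e^{-i s (Phi - th)} = r e^{i s th} = a + z. *)
Lemma polar_imaginary_root : charf (r * cos th) w tau (0, s * (r * sin th)) = 0%C.
Proof.
  assert (Hsign : s = 1 \/ s = -1) by (destruct (Rle_or_lt 0 s); [left | right]; nra).
  rewrite Hw. unfold charf, Cexp. simpl.
  replace (- (tau * 0 - 0 * (s * (r * sin th)))) with 0 by ring.
  replace (- (tau * (s * (r * sin th)) + 0 * 0)) with (s * (th - Phi)) by nra.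
  rewrite exp_0. set (d := th - Phi).
  replace th with (Phi + d) by (unfold d; ring).
  rewrite cos_plus, sin_plus.
  destruct Hsign as [-> | ->];
    [replace (1 * d) with d by ring | replace (-1 * d) with (- d) by ring; rewrite cos_neg, sin_neg];
    apply injective_projections; simpl; ring.
Qed.

End PolarForm.

(* The sign of a real number, with sign 0 = 1. *)
Definition sign (x : R) : R := if Rle_dec 0 x then 1 else -1.

Lemma Cmod_sq (p q : R) : Cmod (p, q) ^ 2 = p ^ 2 + q ^ 2.
Proof. unfold Cmod; cbn [fst snd]. rewrite pow2_sqrt; [ring | nra]. Qed.

Lemma Rabs_Arg (w : C) : Rabs (Arg w) = acos (Re w / Cmod w).
Proof.
  unfold Arg. pose proof (acos_bound (Re w / Cmod w)).
  destruct Rle_dec; [rewrite Rabs_pos_eq | rewrite Rabs_Ropp, Rabs_pos_eq]; lra.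
Qed.

Lemma polar_form (w : C) : 0 < Cmod w ->
  w = (Cmod w * cos (Rabs (Arg w)), sign (Im w) * (Cmod w * sin (Rabs (Arg w)))).
Proof.
  destruct w as [p q]. intros Hr. pose proof (Cmod_sq p q) as Hr2.
  rewrite Rabs_Arg. unfold Re, Im; simpl.
  assert (Hp : p ^ 2 <= Cmod (p, q) ^ 2) by nra.
  rewrite cos_acos, sin_acos_ratio by (try apply ratio_bound; assumption).
  replace (Cmod (p, q) ^ 2 - p ^ 2) with (q²) by (unfold Rsqr; lra).
  rewrite sqrt_Rsqr_abs. unfold sign, Rabs.
  set (r := Cmod (p, q)) in *.
  f_equal; [field; lra |].
  destruct Rle_dec, Rcase_abs; try lra; field; lra.
Qed.

Lemma D_c_polar (a : R) (w : C) : D_c a w ->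
  exists r th Phi s, 0 < r /\ 0 < th /\ th < Phi /\ Phi <= PI /\ s * s = 1 /\
    w = (r * cos Phi, s * (r * sin Phi)) /\ a = r * cos th /\
    tau_c a w * (r * sin th) = Phi - th.
Proof.
  intros [_ [Hpa Har]].
  set (r := Cmod w). pose proof (Cmod_ge_0 w) as Hr0. fold r in Hr0, Har.
  assert (Hr2 : Re w ^ 2 <= r ^ 2)
    by (destruct w as [p q]; unfold r; rewrite Cmod_sq; simpl; nra).
  assert (Hr : 0 < r) by nra.
  assert (Hp1 : -1 <= Re w / r <= 1) by (apply ratio_bound; assumption).
  assert (Hpa1 : Re w / r < a / r) by (apply Rmult_lt_compat_r; [apply Rinv_0_lt_compat |]; lra).
  assert (Ha1 : a / r < 1) by (apply Rlt_div_l; lra).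
  assert (Hth := acos_bound_lt (a / r) ltac:(lra)).
  assert (Hlow : - r <= Re w) by (destruct (Rle_or_lt (- r) (Re w)); [assumption | nra]).
  assert (Ha2 : a ^ 2 < r ^ 2) by nra.
  exists r, (acos (a / r)), (Rabs (Arg w)), (sign (Im w)).
  rewrite Rabs_Arg. fold r.
  assert (Hsin : r * sin (acos (a / r)) = sqrt (r ^ 2 - a ^ 2))
    by (rewrite sin_acos_ratio by lra; field; lra).
  assert (Hsq : 0 < sqrt (r ^ 2 - a ^ 2)) by (apply sqrt_lt_R0; lra).
  repeat split; try lra.
  - apply acos_lt; lra.
  - apply acos_bound.
  - unfold sign; destruct Rle_dec; ring.
  - rewrite <- Rabs_Arg. exact (polar_form w Hr).
  - rewrite cos_acos by lra. field. lra.
  - unfold tau_c. rewrite Hsin, Rabs_Arg. fold r. field. lra.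
Qed.

Theorem mainTheorem2 (a : R) (w : C) :
  D_c a w ->
  (forall z : C, charf a w (tau_c a w) z = 0%C -> Re z <= 0) /\
  (exists z : C, Re z = 0 /\ charf a w (tau_c a w) z = 0%C).
Proof.
  intros HD.
  destruct (D_c_polar a w HD)
    as (r & th & Phi & s & Hr & Hth & Hth_Phi & HPhi & Hs & Hw & Ha & Htau).
  revert Htau. generalize (tau_c a w) as tau. intros tau Htau. subst a.
  split.
  - intros z. eapply polar_no_right_root; eassumption.
  - exists (0, s * (r * sin th)). split; [reflexivity |].
    eapply polar_imaginary_root; eassumption.
Qed.
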